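(* Let $B_0,\ldots,B_N$ be complex $d\times d$ matrices, $T(\lambda)=\sum_{i=0}^N\lambda^iB_i$, and $\mathcal{F}(\lambda)=\det T(\lambda)$. Let $e\ge0$ be the largest integer such that $\lambda^e$ divides $\mathcal{F}(\lambda)$, so $\mathcal{F}(\lambda)=\lambda^eg(\lambda)$ with $g$ a polynomial, $g(0)\ne0$. Let $\boldsymbol\lambda=(\lambda_1,\ldots,\lambda_m)$ be a stable non-resonant vector of eigenvalues none of which is zero. Then there exists a constant $C>0$ such that $$\|T(\boldsymbol\lambda^\alpha)^{-1}\|\le C\,|\boldsymbol\lambda^\alpha|^{-e}\qquad\text{for all }\alpha\in\mathbb{Z}_+^m\text{ with }|\alpha|\ge2.$$
   Context: $\|\cdot\|$ is any fixed matrix norm. $\boldsymbol\lambda^\alpha=\prod\lambda_i^{\alpha_i}$. A vector $\boldsymbol\lambda\in\mathbb{C}^m$ is a stable non-resonant vector of eigenvalues if $|\lambda_i|<1$, $\mathcal{F}(\lambda_i)=0$ for all $i$, and $\mathcal{F}(\boldsymbol\lambda^\alpha)\ne0$ for all $\alpha\in\mathbb{Z}_+^m$ with $|\alpha|\ge2$. *)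

From HB Require Import structures.
From mathcomp Require Import all_boot all_order all_algebra.
Set Implicit Arguments. Unset Strict Implicit. Unset Printing Implicit Defensive.
Import Order.TTheory GRing.Theory Num.Theory.
Local Open Scope ring_scope.

Definition Teval (C : numClosedFieldType) (d N : nat) (B : 'I_N.+1 -> 'M[C]_d)
  (mu : C) : 'M[C]_d := \sum_(i < N.+1) (mu ^+ i) *: B i.

Definition Tpoly (C : numClosedFieldType) (d N : nat) (B : 'I_N.+1 -> 'M[C]_d)
  : 'M[{poly C}]_d := \sum_(i < N.+1) ('X ^+ i) *: map_mx polyC (B i).

Definition Fpoly (C : numClosedFieldType) (d N : nat) (B : 'I_N.+1 -> 'M[C]_d)
  : {poly C} := \det (Tpoly B).

Definition mpow (C : numClosedFieldType) (m : nat) (lam : 'I_m -> C)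
  (alpha : 'I_m -> nat) : C := \prod_(i < m) lam i ^+ alpha i.
Definition mlen (m : nat) (alpha : 'I_m -> nat) : nat := \sum_(i < m) alpha i.

Definition stable_nonresonant (C : numClosedFieldType) (m : nat)
  (F : {poly C}) (lam : 'I_m -> C) : Prop :=
  (forall i, `|lam i| < 1) /\ (forall i, root F (lam i)) /\
  (forall alpha : 'I_m -> nat, (2 <= mlen alpha)%N -> ~~ root F (mpow lam alpha)).

Definition matrix_norm (C : numClosedFieldType) (d : nat)
  (nrm : 'M[C]_d -> C) : Prop :=
  (forall A, 0 <= nrm A) /\ (forall A, nrm A = 0 -> A = 0) /\
  (forall (a : C) A, nrm (a *: A) = `|a| * nrm A) /\
  (forall A B, nrm (A + B) <= nrm A + nrm B).

From HB Require Import structures.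
From mathcomp Require Import all_boot all_order all_algebra.
From mathcomp Require Import ring.
Import Order.TTheory GRing.Theory Num.Theory.
Set Implicit Arguments. Unset Strict Implicit.
Local Open Scope ring_scope.

(* For F(mu) != 0 Cramer's rule gives
     T(mu)^-1 = adj T(mu) / F(mu),   F(mu) = mu^e g(mu),
   so for mu = lam^alpha it suffices to bound ||adj T(mu)|| and |g(mu)|^-1
   uniformly in alpha.
   - Every lam^alpha lies in the closed unit disc, where the polynomial
     entries of adj T are bounded by the sums of the moduli of their
     coefficients; a matrix norm is dominated by the entrywise moduli.
   - Since g(0) != 0, |g(mu)| >= |g(0)|/2 for |mu| small; and |lam^alpha| is
     small as soon as one exponent alpha_i is large (|lam_i| < 1).  The
     remaining exponents range over a finite box, on which |g(lam^alpha)|^-1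
     takes finitely many values. *)

Lemma bernoulli_ineq (R : numDomainType) (h : R) (k : nat) :
  0 <= h -> 1 + h *+ k <= (1 + h) ^+ k.
Proof.
move=> h0; elim: k => [|k IH]; first by rewrite mulr0n expr0 addr0.
rewrite exprS; apply: le_trans (ler_wpM2l _ IH); last by rewrite addr_ge0.
have -> : (1 + h) * (1 + h *+ k) = 1 + h *+ k.+1 + (h * h) *+ k.
  by rewrite mulrS mulrDl mul1r mulrDr mulr1 mulrnAr; ring.
by rewrite lerDl mulrn_wge0 // mulr_ge0.
Qed.

Lemma expr_eventually_le (R : archiNumFieldType) (x eps : R) :
  0 <= x -> x < 1 -> 0 < eps -> exists n, forall k, (n <= k)%N -> x ^+ k <= eps.
Proof.
move=> x0 x1 eps0; have [->|xn0] := eqVneq x 0.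
  by exists 1%N => -[|k] // _; rewrite expr0n ltW.
have xp : 0 < x by rewrite lt_def xn0.
pose h := x^-1 - 1.
have hp : 0 < h by rewrite subr_gt0 invf_gt1.
have b0 : 0 <= (eps * h)^-1 by rewrite invr_ge0 ltW // mulr_gt0.
exists (Num.Def.archi_bound (eps * h)^-1) => k hk.
have large_k : (eps * h)^-1 < k%:R.
  by apply: lt_le_trans (archi_boundP b0) _; rewrite ler_nat.
have xk : x ^+ k = ((1 + h) ^+ k)^-1 by rewrite /h addrC subrK exprVn invrK.
have growth : eps^-1 <= (1 + h) ^+ k.
  apply: le_trans (bernoulli_ineq k (ltW hp)).
  apply: (@le_trans _ _ (h *+ k)); last by rewrite lerDr.
  by rewrite -mulr_natr -ler_pdivrMl // mulrC -invfM ltW.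
rewrite xk -(invrK eps) lef_pV2 ?posrE ?invr_gt0 //.
by rewrite exprn_gt0 // addr_gt0.
Qed.

Definition coef_abs_sum (R : numDomainType) (p : {poly R}) : R :=
  \sum_(i < size p) `|p`_i|.

Lemma coef_abs_sum_ge0 (R : numDomainType) (p : {poly R}) : 0 <= coef_abs_sum p.
Proof. by apply: sumr_ge0 => i _; exact: normr_ge0. Qed.

Lemma horner_unit_disc_bound (R : numDomainType) (p : {poly R}) (x : R) :
  `|x| <= 1 -> `|p.[x]| <= coef_abs_sum p.
Proof.
move=> x1; rewrite horner_coef; apply: le_trans (ler_norm_sum _ _ _) _.
apply: ler_sum => i _; rewrite normrM normrX.
by apply: ler_piMr; [exact: normr_ge0 | exact: exprn_ile1].
Qed.

Lemma horner_near0 (R : numDomainType) (p : {poly R}) (x : R) :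
  `|x| <= 1 -> `|p.[x] - p`_0| <= `|x| * coef_abs_sum p.
Proof.
move=> x1; rewrite horner_coef /coef_abs_sum.
case E: (size p) => [|n].
  move/eqP: E; rewrite size_poly_eq0 => /eqP ->.
  by rewrite !big_ord0 coef0 subrr normr0 mulr0.
rewrite !big_ord_recl /= expr0 mulr1 (addrC (p`_0)) addrK.
apply: le_trans (ler_norm_sum _ _ _) _.
rewrite mulrDr; apply: ler_wpDl; first by rewrite mulr_ge0.
rewrite mulr_sumr; apply: ler_sum => i _.
rewrite /bump /= add1n normrM normrX exprS mulrCA.
apply: ler_wpM2l; first exact: normr_ge0.
by apply: ler_piMr; [exact: normr_ge0 | exact: exprn_ile1].
Qed.

Lemma poly_inv_bounded_near0 (R : numFieldType) (p : {poly R}) :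
  p.[0] != 0 -> exists2 delta : R, 0 < delta &
    forall x, `|x| <= 1 -> `|x| <= delta -> `|p.[x]|^-1 <= 2 / `|p.[0]|.
Proof.
rewrite horner_coef0 => p0n0.
have p0 : 0 < `|p`_0| by rewrite normr_gt0.
pose S := coef_abs_sum p.
have S1 : 0 < S + 1 by rewrite ltr_wpDl ?coef_abs_sum_ge0.
exists (`|p`_0| / (2 * (S + 1))); first by rewrite divr_gt0 // mulr_gt0.
move=> x x1 xd.
have half_gap : `|x| * S <= `|p`_0| / 2.
  have -> : `|p`_0| / 2 = `|p`_0| / (2 * (S + 1)) * (S + 1).
    by rewrite invfM mulrA -mulrA mulVf ?mulr1 // lt0r_neq0.
  apply: le_trans (ler_wpM2r (coef_abs_sum_ge0 _) xd) _.
  by rewrite ler_wpM2l ?lerDl // divr_ge0 ?mulr_ge0 // ltW.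
have lower : `|p`_0| / 2 <= `|p.[x]|.
  have gap : `|p`_0| - `|p.[x]| <= `|p`_0| / 2.
    apply: le_trans (lerB_dist _ _) _; rewrite distrC.
    exact: le_trans (horner_near0 p x1) half_gap.
  by rewrite -(lerD2r (`|p`_0| / 2)) -splitr addrC -lerBlDr.
rewrite -(invf_div (`|p`_0|)) lef_pV2 // posrE ?divr_gt0 //.
by apply: lt_le_trans lower; rewrite divr_gt0.
Qed.

Section Monomials.
Variables (R : archiClosedFieldType) (m : nat) (lam : 'I_m -> R).
Hypothesis lam_lt1 : forall i, `|lam i| < 1.

Lemma mpow_norm_le1 (alpha : 'I_m -> nat) : `|mpow lam alpha| <= 1.
Proof.
rewrite /mpow normr_prod; apply: prodr_ile1 => i _.
by rewrite normrX exprn_ge0 ?exprn_ile1 ?normr_ge0 // ltW.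
Qed.

Lemma mpow_eventually_small (delta : R) : 0 < delta ->
  exists n0, forall alpha i, (n0 <= alpha i)%N -> `|mpow lam alpha| <= delta.
Proof.
move=> d0.
have /fin_all_exists [nf hnf] : forall i, exists n,
    forall k, (n <= k)%N -> `|lam i| ^+ k <= delta.
  by move=> i; apply: expr_eventually_le.
exists (\sum_i nf i)%N => alpha i hi.
rewrite /mpow normr_prod (bigD1 i) //= normrX.
apply: le_trans (ler_piMr _ _) _.
- by rewrite exprn_ge0.
- apply: prodr_ile1 => j _.
  by rewrite normrX exprn_ge0 ?exprn_ile1 ?normr_ge0 // ltW.
by apply: hnf; apply: leq_trans hi; rewrite (bigD1 i) //= leq_addr.
Qed.

(* If p(0) != 0, the values |p(lam^alpha)|^-1 are bounded uniformly in alpha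
   (with the convention 0^-1 = 0, which only concerns roots of p). *)
Lemma poly_inv_bounded_on_monomials (p : {poly R}) : p.[0] != 0 ->
  exists2 G : R, 0 < G & forall alpha, `|p.[mpow lam alpha]|^-1 <= G.
Proof.
move=> p0n0; have [delta d0 near0] := poly_inv_bounded_near0 p0n0.
have [n0 small] := mpow_eventually_small d0.
pose box_values := \sum_(f : {ffun 'I_m -> 'I_n0})
  `|p.[mpow lam (fun i => (f i : nat))]|^-1.
have box_ge0 : 0 <= box_values by apply: sumr_ge0 => f _; rewrite invr_ge0.
have G0 : 0 < 2 / `|p.[0]| by rewrite divr_gt0 ?normr_gt0.
exists (2 / `|p.[0]| + box_values); first by rewrite ltr_wpDr.
move=> alpha; have [inbox|] := boolP [forall i, (alpha i < n0)%N].
  pose f : {ffun 'I_m -> 'I_n0} := [ffun i => Ordinal (forallP inbox i)].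
  have -> : mpow lam alpha = mpow lam (fun i => (f i : nat)).
    by apply: eq_bigr => i _; rewrite ffunE.
  rewrite /box_values (bigD1 f) //= addrCA lerDl.
  by rewrite addr_ge0 ?(ltW G0) // sumr_ge0 // => h _; rewrite invr_ge0.
move/forallPn => [i]; rewrite -leqNgt => /small alpha_small.
by apply: le_trans (near0 _ (mpow_norm_le1 _) alpha_small) _; rewrite lerDl.
Qed.

End Monomials.

Section MatrixNorm.
Variables (C : numClosedFieldType) (d : nat) (nrm : 'M[C]_d -> C).
Hypothesis nrmP : matrix_norm nrm.

Lemma matrix_norm0 : nrm 0 = 0.
Proof.
have [_ [_ [nrmZ _]]] := nrmP.
by rewrite -(scale0r (0 : 'M[C]_d)) nrmZ normr0 mul0r.
Qed.

Lemma matrix_norm_sum I (r : seq I) (F : I -> 'M[C]_d) :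
  nrm (\sum_(i <- r) F i) <= \sum_(i <- r) nrm (F i).
Proof.
have [_ [_ [_ nrmD]]] := nrmP.
apply: (big_ind2 (fun A c => nrm A <= c)); rewrite ?matrix_norm0 //.
by move=> A a B b hA hB; apply: le_trans (nrmD A B) _; exact: lerD.
Qed.

Lemma matrix_norm_entry_bound (A : 'M[C]_d) :
  nrm A <= \sum_(i < d) \sum_(j < d) `|A i j| * nrm (delta_mx i j).
Proof.
have [_ [_ [nrmZ _]]] := nrmP.
rewrite {1}(matrix_sum_delta A); apply: le_trans (matrix_norm_sum _ _) _.
apply: ler_sum => i _; apply: le_trans (matrix_norm_sum _ _) _.
by apply: ler_sum => j _; rewrite nrmZ.
Qed.

Lemma poly_matrix_bounded (P : 'M[{poly C}]_d) : exists2 K : C, 0 <= K &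
  forall mu, `|mu| <= 1 -> nrm (map_mx (horner_eval mu) P) <= K.
Proof.
have [nrm_ge0 _] := nrmP.
exists (\sum_(i < d) \sum_(j < d) coef_abs_sum (P i j) * nrm (delta_mx i j)).
  by do 2![apply: sumr_ge0 => ? _]; rewrite mulr_ge0 ?coef_abs_sum_ge0.
move=> mu mu1; apply: le_trans (matrix_norm_entry_bound _) _.
apply: ler_sum => i _; apply: ler_sum => j _; rewrite mxE horner_evalE.
by apply: ler_wpM2r; [exact: nrm_ge0 | exact: horner_unit_disc_bound].
Qed.

End MatrixNorm.

Lemma Teval_map (C : numClosedFieldType) (d N : nat) (B : 'I_N.+1 -> 'M[C]_d)
  (mu : C) : Teval B mu = map_mx (horner_eval mu) (Tpoly B).
Proof.
apply/matrixP => i j.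
rewrite !mxE /Teval /Tpoly summxE horner_evalE !summxE horner_sum.
by apply: eq_bigr => k _; rewrite !mxE hornerM hornerXn hornerC.
Qed.

Lemma invmx_Teval (C : numClosedFieldType) (d N : nat) (B : 'I_N.+1 -> 'M[C]_d)
  (mu : C) : (Fpoly B).[mu] != 0 ->
  invmx (Teval B mu) =
    (Fpoly B).[mu]^-1 *: map_mx (horner_eval mu) (\adj (Tpoly B)).
Proof.
have detT : \det (Teval B mu) = (Fpoly B).[mu] by rewrite Teval_map det_map_mx.
move=> F_mu; rewrite /invmx unitmxE unitfE detT F_mu /=.
by rewrite Teval_map map_mx_adj.
Qed.


Theorem mainTheorem10 (C : archiClosedFieldType) (d N : nat)
  (B : 'I_N.+1 -> 'M[C]_d) (nrm : 'M[C]_d -> C) (e : nat) (g : {poly C})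
  (m : nat) (lam : 'I_m -> C) :
  matrix_norm nrm ->
  Fpoly B = 'X ^+ e * g -> g.[0] != 0 ->
  stable_nonresonant (Fpoly B) lam ->
  (forall i, lam i != 0) ->
  exists2 K : C, 0 < K &
    forall alpha : 'I_m -> nat, (2 <= mlen alpha)%N ->
      nrm (invmx (Teval B (mpow lam alpha))) <= K * `|mpow lam alpha| ^- e.
Proof.
move=> nrmP F_eq g0 [lam_lt1 [_ nonres]] _.
have [nrm_ge0 [_ [nrmZ _]]] := nrmP.
have [Kadj Kadj0 adj_bound] := poly_matrix_bounded nrmP (\adj (Tpoly B)).
have [G G0 g_bound] := poly_inv_bounded_on_monomials lam_lt1 g0.
exists ((Kadj + 1) * G); first by rewrite mulr_gt0 // ltr_wpDl.
move=> alpha alpha2; pose mu := mpow lam alpha.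
have mu1 : `|mu| <= 1 := mpow_norm_le1 lam_lt1 alpha.
have F_mu : (Fpoly B).[mu] = mu ^+ e * g.[mu] by rewrite F_eq hornerM hornerXn.
rewrite invmx_Teval ?nonres // nrmZ F_mu normfV normrM normrX invfM.
rewrite -mulrA mulrC; apply: ler_wpM2r; first by rewrite invr_ge0 exprn_ge0.
rewrite mulrC; apply: ler_pM; rewrite ?invr_ge0 ?nrm_ge0 ?g_bound //.
by apply: le_trans (adj_bound _ mu1) _; rewrite lerDl.
Qed.
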